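(* Let $R$ be a ring. Let $(M_\alpha,\varphi_{\alpha\beta})$ be an inverse system of injective left $R$-modules indexed by a countable upward directed poset $I$, with surjective homomorphisms $\varphi_{\alpha\beta}:M_\beta\to M_\alpha$ ($\alpha\le\beta$), and let $M=\varprojlim M_\alpha$ with canonical maps $\pi_\alpha:M\to M_\alpha$. Let $(N_\gamma,\psi_{\delta\gamma})$ be a direct system of projective left $R$-modules indexed by a countable upward directed poset $J$, with one-to-one homomorphisms $\psi_{\delta\gamma}:N_\gamma\to N_\delta$ ($\gamma\le\delta$), and let $N=\varinjlim N_\gamma$ with canonical maps $\iota_\gamma:N_\gamma\to N$. Then for any $\gamma\in J$, $\alpha\in I$ and any homomorphism $f:N_\gamma\to M_\alpha$, there exists a homomorphism $h:N\to M$ such that $f=\pi_\alpha\circ h\circ\iota_\gamma$.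
   Context: Rings are associative with unit, modules are unital. In both the direct and inverse systems the index sets are upward directed; connecting maps of the inverse system go from higher to lower indices, those of the direct system from lower to higher indices. *)

From HB Require Import structures.
From mathcomp Require Import all_boot all_order all_algebra.
Set Implicit Arguments. Unset Strict Implicit. Unset Printing Implicit Defensive.
Import GRing.Theory.
Local Open Scope ring_scope.

Definition injective_module (R : pzRingType) (E : lmodType R) : Prop :=
  forall (X Y : lmodType R) (i : {linear X -> Y}) (f : {linear X -> E}),
    injective i -> exists g : {linear Y -> E}, forall x, g (i x) = f x.

Definition projective_module (R : pzRingType) (P : lmodType R) : Prop :=
  forall (X Y : lmodType R) (p : {linear X -> Y}) (f : {linear P -> Y}),
    (forall y, exists x, p x = y) -> exists g : {linear P -> X}, forall x, p (g x) = f x.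

Definition countable_directed_poset (I : Type) (le : I -> I -> bool) : Prop :=
  (forall a, le a a) /\
  (forall a b, le a b -> le b a -> a = b) /\
  (forall a b c, le a b -> le b c -> le a c) /\
  (forall a b, exists c, le a c && le b c) /\
  inhabited I /\
  (exists e : I -> nat, injective e).

(* Inverse system: phi a b : M b -> M a for a <= b (values for a not <= b are
   irrelevant). *)
Definition inverse_system (R : pzRingType) (I : Type) (le : I -> I -> bool)
  (M : I -> lmodType R) (phi : forall a b, {linear M b -> M a}) : Prop :=
  (forall a x, phi a a x = x) /\
  (forall a b c, le a b -> le b c -> forall x, phi a b (phi b c x) = phi a c x).

Definition direct_system (R : pzRingType) (J : Type) (le : J -> J -> bool)
  (N : J -> lmodType R) (psi : forall d g, {linear N g -> N d}) : Prop :=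
  (forall g x, psi g g x = x) /\
  (forall g d e, le g d -> le d e -> forall x, psi e d (psi d g x) = psi e g x).

Definition is_inverse_limit (R : pzRingType) (I : Type) (le : I -> I -> bool)
  (M : I -> lmodType R) (phi : forall a b, {linear M b -> M a})
  (L : lmodType R) (pi : forall a, {linear L -> M a}) : Prop :=
  (forall a b, le a b -> forall x, phi a b (pi b x) = pi a x) /\
  (forall (X : lmodType R) (g : forall a, {linear X -> M a}),
     (forall a b, le a b -> forall x, phi a b (g b x) = g a x) ->
     exists u : {linear X -> L},
       (forall a x, pi a (u x) = g a x) /\
       (forall u' : {linear X -> L}, (forall a x, pi a (u' x) = g a x) ->
          forall x, u' x = u x)).

Definition is_direct_limit (R : pzRingType) (J : Type) (le : J -> J -> bool)
  (N : J -> lmodType R) (psi : forall d g, {linear N g -> N d})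
  (L : lmodType R) (iota : forall g, {linear N g -> L}) : Prop :=
  (forall g d, le g d -> forall x, iota d (psi d g x) = iota g x) /\
  (forall (X : lmodType R) (k : forall g, {linear N g -> X}),
     (forall g d, le g d -> forall x, k d (psi d g x) = k g x) ->
     exists u : {linear L -> X},
       (forall g x, u (iota g x) = k g x) /\
       (forall u' : {linear L -> X}, (forall g x, u' (iota g x) = k g x) ->
          forall x, u' x = u x)).

From HB Require Import structures.
From mathcomp Require Import all_boot all_order all_algebra.
From Stdlib Require Import ClassicalEpsilon.

(* Since I and J are countable and directed, there are monotone
   cofinal chains a = a_0 <= a_1 <= ... in I and g = g_0 <= g_1 <= ... in J.
   Along these chains we build, by recursion, maps h_k : N_{g_k} -> M_{a_k}
   with h_0 = f, each h_{k+1} lifting h_k: the map h_k extends along the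
   monomorphism psi_{g_{k+1} g_k} because M_{a_k} is injective, and the
   extension lifts along the epimorphism phi_{a_k a_{k+1}} because
   N_{g_{k+1}} is projective.  Restricting h_k to N_d and projecting to M_b
   for k large (cofinality) gives a family of maps N_d -> M_b that is
   independent of k and compatible with both systems; by the universal
   properties of the limit and the colimit it induces h : N -> M. *)

Set Implicit Arguments.
Unset Strict Implicit.
Unset Printing Implicit Defensive.

Local Open Scope ring_scope.

Lemma countable_directed_chain_data (I : Type) (le : rel I) :
  countable_directed_poset le ->
  exists (ub : I -> I -> I) (idx : I -> nat) (enum : nat -> I),
    (forall x y, le x (ub x y) && le y (ub x y)) /\ cancel idx enum.
Proof.
case=> _ [_ [_ [dir [[x0] [idx idx_inj]]]]].
exists (fun x y => epsilon (inhabits x) (fun c => le x c && le y c)), idx,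
  (fun n => epsilon (inhabits x0) (fun b => idx b = n)).
split=> [x y|b]; first exact: epsilon_spec (dir x y).
apply: idx_inj; exact: (epsilon_spec _ (fun c => idx c = idx b) (ex_intro _ b erefl)).
Qed.

Section CofinalChain.
Variables (I : Type) (le : rel I) (ub : I -> I -> I) (enum : nat -> I).
Hypothesis le_refl : forall x, le x x.
Hypothesis le_trans : forall x y z, le x y -> le y z -> le x z.
Hypothesis le_ub : forall x y, le x (ub x y) && le y (ub x y).

Fixpoint chain (a : I) (k : nat) : I :=
  if k is k'.+1 then ub (chain a k') (enum k') else a.

Lemma chain_mono a : {homo chain a : k k' / (k <= k')%N >-> le k k'}.
Proof.
apply: homo_leq => // [y x z|k]; first exact: le_trans.
by case/andP: (le_ub (chain a k) (enum k)).
Qed.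

Lemma chain_cofinal a n : le (enum n) (chain a n.+1).
Proof. by case/andP: (le_ub (chain a n) (enum n)). Qed.

End CofinalChain.

Lemma extend_and_lift (R : pzRingType) (N N' M M' : lmodType R)
    (i : {linear N -> N'}) (p : {linear M' -> M}) :
  injective i -> (forall y, exists x, p x = y) ->
  injective_module M -> projective_module N' ->
  forall h : {linear N -> M},
    exists h' : {linear N' -> M'}, forall x, p (h' (i x)) = h x.
Proof.
move=> i_inj p_surj M_inj N'_proj h.
have [e eE] := M_inj _ _ i h i_inj.
have [h' h'E] := N'_proj _ _ p e p_surj.
by exists h' => x; rewrite h'E eE.
Qed.

Section Tower.
Variables (R : pzRingType) (I J : Type) (leI : rel I) (leJ : rel J).
Variables (M : I -> lmodType R) (phi : forall a b, {linear M b -> M a}).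
Variables (N : J -> lmodType R) (psi : forall d g, {linear N g -> N d}).
Hypothesis Hphi : inverse_system leI phi.
Hypothesis Hpsi : direct_system leJ psi.
Variables (a_ : nat -> I) (g_ : nat -> J).
Hypothesis a_mono : {homo a_ : k k' / (k <= k')%N >-> leI k k'}.
Hypothesis g_mono : {homo g_ : k k' / (k <= k')%N >-> leJ k k'}.

Definition compatible_tower (h : forall k, {linear N (g_ k) -> M (a_ k)}) :=
  forall k k', (k <= k')%N ->
    forall x, phi (a_ k) (a_ k') (h k' (psi (g_ k') (g_ k) x)) = h k x.

Section Construction.
Hypothesis Minj : forall a, injective_module (M a).
Hypothesis Nproj : forall g, projective_module (N g).
Hypothesis phi_surj :
  forall a b, leI a b -> forall y : M a, exists x, phi a b x = y.
Hypothesis psi_inj : forall g d, leJ g d -> injective (psi d g).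

Lemma tower_exists (f : {linear N (g_ 0) -> M (a_ 0)}) :
  exists h : forall k, {linear N (g_ k) -> M (a_ k)},
    (forall x, h 0%N x = f x) /\ compatible_tower h.
Proof.
have [phi_id phi_comp] := Hphi; have [psi_id psi_comp] := Hpsi.
have step k (h : {linear N (g_ k) -> M (a_ k)}) :
    {h' : {linear N (g_ k.+1) -> M (a_ k.+1)} |
      forall x, phi (a_ k) (a_ k.+1) (h' (psi (g_ k.+1) (g_ k) x)) = h x}.
  apply: constructive_indefinite_description.
  apply: extend_and_lift => //.
  - exact: psi_inj (g_mono (leqnSn k)).
  - exact: phi_surj (a_mono (leqnSn k)).
pose h := fix h k : {linear N (g_ k) -> M (a_ k)} :=
  match k return {linear N (g_ k) -> M (a_ k)} with
  | 0 => f
  | k'.+1 => sval (step k' (h k'))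
  end.
exists h; split=> // k k'; elim: k' => [|k' IH].
  by rewrite leqn0 => /eqP-> x; rewrite psi_id phi_id.
rewrite leq_eqVlt => /orP[/eqP-> x|]; first by rewrite psi_id phi_id.
rewrite ltnS => le_kk' x.
rewrite -(psi_comp _ _ _ (g_mono le_kk') (g_mono (leqnSn k'))).
rewrite -(phi_comp _ _ _ (a_mono le_kk') (a_mono (leqnSn k'))).
by rewrite (svalP (step k' (h k'))) IH.
Qed.

End Construction.

Section Components.
Hypothesis leI_refl : forall x, leI x x.
Hypothesis leI_trans : forall x y z, leI x y -> leI y z -> leI x z.
Hypothesis leJ_refl : forall x, leJ x x.
Hypothesis leJ_trans : forall x y z, leJ x y -> leJ y z -> leJ x z.
Variable h : forall k, {linear N (g_ k) -> M (a_ k)}.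
Hypothesis h_compat : compatible_tower h.
Variables (reachI : I -> nat) (reachJ : J -> nat).
Hypothesis reachI_le : forall b, leI b (a_ (reachI b)).
Hypothesis reachJ_le : forall d, leJ d (g_ (reachJ d)).

Lemma tower_restriction_stable d b k k' x :
  (k <= k')%N -> leJ d (g_ k) -> leI b (a_ k) ->
  phi b (a_ k') (h k' (psi (g_ k') d x)) = phi b (a_ k) (h k (psi (g_ k) d x)).
Proof.
move=> le_kk' le_d le_b; have [_ phi_comp] := Hphi; have [_ psi_comp] := Hpsi.
rewrite -(psi_comp _ _ _ le_d (g_mono le_kk')).
by rewrite -(phi_comp _ _ _ le_b (a_mono le_kk')) h_compat.
Qed.

Definition stage (d : J) (b : I) : nat := maxn (reachJ d) (reachI b).

Lemma stage_le d b k :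
  (stage d b <= k)%N -> leJ d (g_ k) /\ leI b (a_ k).
Proof.
rewrite geq_max => /andP[le_d le_b]; split.
- exact: leJ_trans (reachJ_le d) (g_mono le_d).
- exact: leI_trans (reachI_le b) (a_mono le_b).
Qed.

Definition component d b : {linear N d -> M b} :=
  phi b (a_ (stage d b)) \o h (stage d b) \o psi (g_ (stage d b)) d.

Lemma componentE d b k x : (stage d b <= k)%N ->
  component d b x = phi b (a_ k) (h k (psi (g_ k) d x)).
Proof.
move=> le_k; have [le_d le_b] := stage_le (leqnn (stage d b)).
by rewrite (tower_restriction_stable x le_k le_d le_b).
Qed.

Lemma component_cone d b b' :
  leI b b' -> forall x, phi b b' (component d b' x) = component d b x.
Proof.
move=> le_bb' x; have [_ phi_comp] := Hphi.
have le_b'k := leq_maxr (stage d b) (stage d b').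
have [_ le_b'] := stage_le le_b'k.
rewrite (componentE x le_b'k) (componentE x (leq_maxl (stage d b) (stage d b'))).
exact: phi_comp.
Qed.

Lemma component_cocone d d' b :
  leJ d d' -> forall x, component d' b (psi d' d x) = component d b x.
Proof.
move=> le_dd' x; have [_ psi_comp] := Hpsi.
have le_d'k := leq_maxr (stage d b) (stage d' b).
have [le_d' _] := stage_le le_d'k.
rewrite (componentE (psi d' d x) le_d'k) (componentE x (leq_maxl (stage d b) (stage d' b))).
by rewrite psi_comp.
Qed.

Lemma component_base x : component (g_ 0) (a_ 0) x = h 0%N x.
Proof.
have [phi_id _] := Hphi; have [psi_id _] := Hpsi.
have := tower_restriction_stable x (leq0n (stage (g_ 0) (a_ 0)))
  (leJ_refl (g_ 0)) (leI_refl (a_ 0)).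
by rewrite psi_id phi_id.
Qed.

End Components.
End Tower.

Lemma hom_colim_lim (R : pzRingType)
    (I : Type) (leI : rel I) (M : I -> lmodType R)
    (phi : forall a b, {linear M b -> M a})
    (Mlim : lmodType R) (pi : forall a, {linear Mlim -> M a})
    (J : Type) (leJ : rel J) (N : J -> lmodType R)
    (psi : forall d g, {linear N g -> N d})
    (Nlim : lmodType R) (iota : forall g, {linear N g -> Nlim})
    (C : forall d b, {linear N d -> M b}) :
  is_inverse_limit leI phi pi -> is_direct_limit leJ psi iota ->
  (forall d b b', leI b b' -> forall x, phi b b' (C d b' x) = C d b x) ->
  (forall d d' b, leJ d d' -> forall x, C d' b (psi d' d x) = C d b x) ->
  exists h : {linear Nlim -> Mlim}, forall d b x, pi b (h (iota d x)) = C d b x.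
Proof.
move=> [_ lim_univ] [_ colim_univ] C_cone C_cocone.
have cone d := constructive_indefinite_description _ (lim_univ _ _ (C_cone d)).
pose u d := sval (cone d).
have u_cocone d d' : leJ d d' -> forall x, u d' (psi d' d x) = u d x.
  move=> le_dd' x; apply: (proj2 (svalP (cone d)) (u d' \o psi d' d)) => b y /=.
  by rewrite (proj1 (svalP (cone d'))) C_cocone.
have [h [hE _]] := colim_univ _ u u_cocone.
by exists h => d b x; rewrite hE (proj1 (svalP (cone d))).
Qed.

Theorem lemma5 (R : pzRingType)
  (I : Type) (leI : I -> I -> bool) (HI : countable_directed_poset leI)
  (M : I -> lmodType R) (phi : forall a b, {linear M b -> M a})
  (Hphi : inverse_system leI phi)
  (Minj : forall a, injective_module (M a))
  (phi_surj : forall a b, leI a b -> forall y : M a, exists x, phi a b x = y)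
  (Mlim : lmodType R) (pi : forall a, {linear Mlim -> M a})
  (Hlim : is_inverse_limit leI phi pi)
  (J : Type) (leJ : J -> J -> bool) (HJ : countable_directed_poset leJ)
  (N : J -> lmodType R) (psi : forall d g, {linear N g -> N d})
  (Hpsi : direct_system leJ psi)
  (Nproj : forall g, projective_module (N g))
  (psi_inj : forall g d, leJ g d -> injective (psi d g))
  (Nlim : lmodType R) (iota : forall g, {linear N g -> Nlim})
  (Hcolim : is_direct_limit leJ psi iota) :
  forall (g : J) (a : I) (f : {linear N g -> M a}),
    exists h : {linear Nlim -> Mlim}, forall x, f x = pi a (h (iota g x)).
Proof.
move=> g a f.
have [ubI [idxI [enumI [ubI_le idxIK]]]] := countable_directed_chain_data HI.
have [ubJ [idxJ [enumJ [ubJ_le idxJK]]]] := countable_directed_chain_data HJ.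
have [leI_refl [_ [leI_trans _]]] := HI; have [leJ_refl [_ [leJ_trans _]]] := HJ.
pose a_ := chain ubI enumI a; pose g_ := chain ubJ enumJ g.
have a_mono := chain_mono enumI leI_refl leI_trans ubI_le a.
have g_mono := chain_mono enumJ leJ_refl leJ_trans ubJ_le g.
pose reachI b := (idxI b).+1; pose reachJ d := (idxJ d).+1.
have reachI_le b : leI b (a_ (reachI b)).
  by rewrite -{1}(idxIK b); exact: chain_cofinal enumI ubI_le a (idxI b).
have reachJ_le d : leJ d (g_ (reachJ d)).
  by rewrite -{1}(idxJK d); exact: chain_cofinal enumJ ubJ_le g (idxJ d).
have [h [h0 h_compat]] :=
  tower_exists Hphi Hpsi a_mono g_mono Minj Nproj phi_surj psi_inj f.
have [H HE] := hom_colim_lim Hlim Hcolim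
  (component_cone Hphi Hpsi a_mono g_mono leI_trans leJ_trans h_compat
     reachI_le reachJ_le)
  (component_cocone Hphi Hpsi a_mono g_mono leI_trans leJ_trans h_compat
     reachI_le reachJ_le).
exists H => x.
by rewrite HE (component_base Hphi Hpsi a_mono g_mono leI_refl leJ_refl h_compat) h0.
Qed.
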